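(* In the setting of the context, suppose $G_{xy}^{[1]}=1$ and $G_x\cong\mathrm{Frob}(20)\times C_2$. Then $G_e\cong\mathrm{M}_{16}$ or $G_e\cong\mathrm{N}_{16}$.
   Context: $\mathcal{A}=(G_x,G_e,G_{xy})$ is a finite, primitive amalgam of degree $(5,2)$ (no nontrivial subgroup of $G_{xy}$ normal in both $G_x$ and $G_e$; $|G_x:G_{xy}|=5$, $|G_e:G_{xy}|=2$), $G=G_x*_{G_{xy}}G_e$ acts on the coset graph (5-valent tree) $\Gamma$, $x$ is the vertex with stabiliser $G_x$, $y$ the neighbour with $G_e$ the setwise stabiliser of $\{x,y\}$ and $G_x\cap G_y=G_{xy}$. $G_z^{[1]}$ is the pointwise stabiliser of $z$ and its neighbours, $G_{xy}^{[1]}=G_x^{[1]}\cap G_y^{[1]}$. $\mathrm{Frob}(20)$ is the Frobenius group of order 20. $\mathrm{M}_{16}=\langle u,v\mid u^8=v^2=1,\ u^v=u^5\rangle$, and $\mathrm{N}_{16}=\langle (1,2,3,4)(5,6,7,8),(5,7)(6,8),(1,5)(2,6)(3,7)(4,8)\rangle\le S_8$. *)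

From HB Require Import structures.
From mathcomp Require Import all_boot all_order all_fingroup all_solvable.
Set Implicit Arguments. Unset Strict Implicit. Unset Printing Implicit Defensive.
Local Open Scope group_scope.

(* lperm n s : the permutation of {0,..,n} sending i to the i-th entry of s
   (s must be a permutation of [0..n]; otherwise it is the identity). *)
Definition lperm_ok n (s : seq nat) :=
  [&& uniq s, size s == n.+1 & all (fun k => k < n.+1) s].

Definition lperm_fun n (s : seq nat) (i : 'I_n.+1) : 'I_n.+1 :=
  if lperm_ok n s then inord (nth 0 s i) else i.

Lemma lperm_inj n s : injective (@lperm_fun n s).
Proof.
move=> i j; rewrite /lperm_fun /lperm_ok; case: ifP => [/and3P[Hu /eqP Hs /allP Ha]|_ //].
have Hi : forall k : 'I_n.+1, nth 0 s k < n.+1.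
  by move=> k; apply: Ha; apply: mem_nth; rewrite Hs.
move/(congr1 (@nat_of_ord _)); rewrite !inordK ?Hi //.
by move/eqP; rewrite nth_uniq ?Hs // => /eqP/val_inj.
Qed.

Definition lperm n s : 'S_n.+1 := perm (@lperm_inj n s).

(* Frob(20) = AGL(1,5) acting on {0,..,4}: generated by x |-> x+1 and x |-> 2x. *)
Definition frob_a : 'S_5 := lperm 4 [:: 1; 2; 3; 4; 0]%N.
Definition frob_b : 'S_5 := lperm 4 [:: 0; 2; 4; 1; 3]%N.
Definition Frob20 : {group 'S_5} := <<[set frob_a; frob_b]>>%G.
Definition C2 : {group 'S_2} := [set: 'S_2]%G.
Definition Frob20xC2 : {group ('S_5 * 'S_2)%type} := setX_group Frob20 C2.

(* ---------- N_16 <= S_8 (points 1..8 of the paper are 0..7 here) ---------- *)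
(* (1,2,3,4)(5,6,7,8) *)
Definition N16_a : 'S_8 := lperm 7 [:: 1; 2; 3; 0; 5; 6; 7; 4]%N.
(* (5,7)(6,8) *)
Definition N16_b : 'S_8 := lperm 7 [:: 0; 1; 2; 3; 6; 7; 4; 5]%N.
(* (1,5)(2,6)(3,7)(4,8) *)
Definition N16_c : 'S_8 := lperm 7 [:: 4; 5; 6; 7; 0; 1; 2; 3]%N.
Definition N16 : {group 'S_8} := <<[set N16_a; N16_b; N16_c]>>%G.

(* G_x^{[1]}: kernel of the action of G_x on the neighbours of x, i.e. on the
   cosets G_x / G_xy : the core of G_xy in G_x. *)
Definition vertex_kernel (gT : finGroupType) (Gx Gxy : {set gT}) : {set gT} :=
  gcore Gxy Gx.

(* G_xy^{[1]} = G_x^{[1]} :&: G_y^{[1]}, where G_y = G_x :^ t for an element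
   t of G_e \ G_xy (the edge flip), hence G_y^{[1]} = (G_x^{[1]}) :^ t. *)
Definition edge_kernel (gT : finGroupType) (Gx Ge Gxy : {set gT}) : {set gT} :=
  vertex_kernel Gx Gxy :&: vertex_kernel Gx Gxy :^ repr (Ge :\: Gxy).

Definition primitive_amalgam (gT : finGroupType) (Gx Ge Gxy : {group gT}) :=
  forall H : {group gT}, H \subset Gxy -> H <| Gx -> H <| Ge -> H :=: 1.

Definition amalgam52 (gT : finGroupType) (Gx Ge Gxy : {group gT}) :=
  [/\ Gxy \subset Gx, Gxy \subset Ge, Gx :&: Ge = Gxy,
      #|Gx : Gxy| = 5 & #|Ge : Gxy| = 2].

(* G_xy has index 5 in G_x ~ Frob(20) x C_2, so it is a Sylow 2-subgroup
   <a> x <z> ~ C_4 x C_2 whose factor <z> is the centre of G_x; in particular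
   z lies in G_x^[1].  Since G_xy^[1] = 1, an element t of G_e \ G_xy does not
   fix z.  Conjugation by t is an automorphism of G_xy of order at most 2
   fixing a^2, the only non-trivial square; it follows that z^t = a^2 z and,
   after possibly replacing a by a z, that a^t = a.  Then t^2 lies in <a>: if
   t^2 = a^{+-1}, then t has order 8, t^z = t^5 and G_e = <t, z> ~ M_16;
   otherwise t or t z is an involution and G_e = (<a> x <z>) : C_2 ~ N_16. *)

From HB Require Import structures.
From mathcomp Require Import all_boot all_order all_fingroup all_solvable.
Set Implicit Arguments. Unset Strict Implicit. Unset Printing Implicit Defensive.
Local Open Scope group_scope.

Lemma index2_sdprod (gT : finGroupType) (G H : {group gT}) x :
  H \subset G -> #|G : H| = 2 -> x \in G :\: H -> #[x] = 2 -> H ><| <[x]> = G.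
Proof.
move=> sHG iHG /setDP[xG x_notin_H] ox.
have tiHx : H :&: <[x]> = 1 by rewrite setIC prime_TIg -?orderE ?ox // cycle_subG.
rewrite sdprodE // ?cycle_subG ?(subsetP (normal_norm (index2_normal sHG iHG))) //.
apply/eqP; rewrite eqEcard mul_subG ?cycle_subG //= TI_cardMg // -orderE ox -iHG.
by rewrite Lagrange.
Qed.

Lemma index2_expg2 (gT : finGroupType) (G H : {group gT}) x :
  H \subset G -> #|G : H| = 2 -> x \in G -> x ^+ 2 \in H.
Proof.
move=> sHG iHG xG; have [xH | x_notin_H] := boolP (x \in H); first exact: groupX.
have xGH : x \in G :\: H by rewrite inE x_notin_H.
apply: contraR x_notin_H => x2_notin_H.
have : x ^+ 2 \in H :* x by rewrite (rcoset_index2 sHG iHG xGH) inE x2_notin_H groupX.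
by case/rcosetP=> h hH /(mulIg x) ->.
Qed.

Lemma mem_gcore_center (gT : finGroupType) (G H : {group gT}) x :
  x \in 'Z(G) -> x \in H -> x \in gcore H G.
Proof.
move=> xZ xH; apply: (subsetP (gcore_max _ _)) (cycle_id x); rewrite ?cycle_subG //.
by apply: cents_norm; rewrite centsC cycle_subG; case/setIP: xZ.
Qed.

Section C4xC2.

Variables (gT : finGroupType) (a z : gT).
Hypotheses (oa : #[a] = 4) (oz : #[z] = 2) (caz : commute a z)
  (z_notin_a : z \notin <[a]>).

Local Notation J := (<[a]> * <[z]>).

Lemma C4xC2_mulg i j k l :
  a ^+ i * z ^+ j * (a ^+ k * z ^+ l) = a ^+ (i + k) * z ^+ (j + l).
Proof.
by rewrite mulgA -(mulgA (a ^+ i)) -(commuteX2 k j caz) mulgA -expgD -mulgA -expgD.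
Qed.

Lemma C4xC2_expgMn i j n : (a ^+ i * z ^+ j) ^+ n = a ^+ (i * n) * z ^+ (j * n).
Proof. by rewrite (expgMn _ (commuteX2 i j caz)) (expgM a) (expgM z). Qed.

Lemma C4xC2_modE i j : a ^+ i * z ^+ j = a ^+ (i %% 4) * z ^+ (j %% 2).
Proof. by rewrite -oa -oz !expg_mod_order. Qed.

Lemma C4xC2_TI : <[a]> :&: <[z]> = 1.
Proof. by rewrite setIC prime_TIg -?orderE ?oz // cycle_subG. Qed.

Lemma card_C4xC2 : #|J| = 8.
Proof. by rewrite TI_cardMg ?C4xC2_TI // -!orderE oa oz. Qed.

Lemma C4xC2_cent : <[z]> \subset 'C(<[a]>).
Proof. by rewrite cycle_subG; apply/centP=> _ /cycleP[k ->]; apply/commuteX/commute_sym. Qed.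

Lemma C4xC2_joinE : <[a]> <*> <[z]> = J.
Proof. exact: cent_joinEr C4xC2_cent. Qed.

Lemma C4xC2_dprod : <[a]> \x <[z]> = <[a]> <*> <[z]>.
Proof. by rewrite dprodE ?C4xC2_joinE ?C4xC2_TI ?C4xC2_cent. Qed.

Lemma C4xC2_coord x :
  x \in J -> exists i j, [/\ i < 4, j < 2 & x = a ^+ i * z ^+ j].
Proof.
case/mulsgP=> _ _ /cycleP[i ->] /cycleP[j ->] ->.
by exists (i %% 4), (j %% 2); rewrite !ltn_pmod // -C4xC2_modE.
Qed.

Lemma C4xC2_eq i j k l :
  a ^+ i * z ^+ j = a ^+ k * z ^+ l -> i = k %[mod 4] /\ j = l %[mod 2].
Proof.
move=> E; have Ea : (a ^+ k)^-1 * a ^+ i = z ^+ l * (z ^+ j)^-1.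
  by apply: (canRL (mulgK _)); rewrite -!mulgA E mulKg.
have : (a ^+ k)^-1 * a ^+ i \in <[a]> :&: <[z]>.
  by rewrite inE {2}Ea !groupM ?groupV ?mem_cycle.
rewrite C4xC2_TI inE => Ea1; move: Ea; rewrite (eqP Ea1) => /esym/eqP Ez1.
move: Ea1 Ez1; rewrite -eq_mulVg1 -eq_mulgV1 !eq_expg_mod_order oa oz.
by move=> /eqP-> /eqP->.
Qed.

Lemma C4xC2_comm x y : x \in J -> y \in J -> commute x y.
Proof.
case/C4xC2_coord=> i [j [_ _ ->]] /C4xC2_coord[k [l [_ _ ->]]].
by rewrite /commute !C4xC2_mulg addnC (addnC j).
Qed.

Lemma a_in_C4xC2 : a \in J.
Proof. by rewrite -{1}[a]mulg1 mem_mulg ?cycle_id. Qed.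

Lemma z_in_C4xC2 : z \in J.
Proof. by rewrite -{1}[z]mul1g mem_mulg ?cycle_id. Qed.

Lemma C4xC2_sqr x : x \in J -> x ^+ 2 \in <[a ^+ 2]>.
Proof.
case/C4xC2_coord=> i [j [_ _ ->]]; rewrite C4xC2_expgMn mulnC (mulnC j) !expgM.
by rewrite -oz expg_order expg1n mulg1 mem_cycle.
Qed.

Lemma order_C4xC2_sqr : #[a ^+ 2] = 2.
Proof. by rewrite orderXdiv oa. Qed.

End C4xC2.

Lemma C4xC2_mulr (gT : finGroupType) (a z : gT) :
    #[a] = 4 -> #[z] = 2 -> commute a z -> z \notin <[a]> ->
  [/\ #[a * z] = 4, z \notin <[a * z]> & <[a * z]> * <[z]> = <[a]> * <[z]>].
Proof.
move=> oa oz caz z_notin_a; have z2 : z ^+ 2 = 1 by rewrite -oz expg_order.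
have oaz : #[a * z] = 4.
  by apply: (@orderXprime _ 2 2) => //; rewrite expgMn // z2 mulg1 order_C4xC2_sqr.
have z_notin_az : z \notin <[a * z]>.
  apply/cycleP=> -[k Ek].
  have : a ^+ 0 * z ^+ 1 = a ^+ k * z ^+ k by rewrite expg0 mul1g -expgMn.
  case/(C4xC2_eq oa oz z_notin_a)=> Ek0 Ek1.
  by move: (modn_dvdm k (isT : 2 %| 4)); rewrite -Ek0 -Ek1.
split=> //; apply/eqP; rewrite eqEcard (card_C4xC2 oaz oz) ?card_C4xC2 // andbT.
by rewrite -(C4xC2_joinE caz) mul_subG ?cycle_subG ?groupM ?mem_gen ?inE ?cycle_id ?orbT.
Qed.

Section InvolutoryConjugation.

Variables (gT : finGroupType) (a z t : gT).
Hypotheses (oa : #[a] = 4) (oz : #[z] = 2) (caz : commute a z)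
  (z_notin_a : z \notin <[a]>).

Local Notation J := (<[a]> * <[z]>).

Hypotheses (nJt : t \in 'N(J)) (t2J : t ^+ 2 \in J) (zt : z ^ t != z).

Let z2 : z ^+ 2 = 1. Proof. by rewrite -oz expg_order. Qed.
Let aJ : a ^ t \in J. Proof. by rewrite memJ_norm ?(a_in_C4xC2 a z). Qed.
Let zJ : z ^ t \in J. Proof. by rewrite memJ_norm ?(z_in_C4xC2 a z). Qed.

Lemma conj_C4xC2_sqr : (a ^+ 2) ^ t = a ^+ 2.
Proof.
have : (a ^+ 2) ^ t \in <[a ^+ 2]> by rewrite conjXg (C4xC2_sqr oa oz caz).
rewrite cycle2g ?(order_C4xC2_sqr oa) // !inE conjg_eq1 -order_eq1 (order_C4xC2_sqr oa).
by move/eqP.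
Qed.

Lemma conj_C4xC2_z : z ^ t = a ^+ 2 * z.
Proof.
have [i [j [lt_i4 lt_j2 Ezt]]] := C4xC2_coord oa oz zJ.
have i2_dvd4 : 4 %| i * 2.
  have : (z ^ t) ^+ 2 = 1 by rewrite -conjXg z2 conj1g.
  by rewrite Ezt (C4xC2_expgMn caz) (mulnC j) (expgM z) z2 expg1n mulg1 -oa order_dvdn => ->.
case: j lt_j2 Ezt => [|[|//]] _; case: i lt_i4 i2_dvd4 => [|[|[|[|//]]]] _ // _.
- by move/eqP; rewrite expg0 mulg1 conjg_eq1 -order_eq1 oz.
- rewrite mulg1 -conj_C4xC2_sqr => /conjg_inj Eza.
  by move: z_notin_a; rewrite Eza mem_cycle.
- by rewrite mul1g => /eqP; rewrite (negPf zt).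
Qed.

Lemma conj_C4xC2_a : a ^ t = a \/ a ^ t = a ^+ 3.
Proof.
have [i [j [lt_i4 lt_j2 Eat]]] := C4xC2_coord oa oz aJ.
have [i_odd _] : i * 2 = 2 %[mod 4] /\ j * 2 = 0 %[mod 2].
  apply: (C4xC2_eq oa oz z_notin_a).
  by rewrite -(C4xC2_expgMn caz) -Eat -conjXg conj_C4xC2_sqr mulg1.
have att : (a ^ t) ^ t = a.
  have cat2 := C4xC2_comm oa oz caz (a_in_C4xC2 a z) t2J.
  by rewrite -conjgM -[t * t]/(t ^+ 2) conjgE cat2 mulKg.
case: j lt_j2 Eat => [|[|//]] _ Eat.
  by rewrite mulg1 in Eat; case: i lt_i4 i_odd Eat => [|[|[|[|//]]]] _ // _ ->; [left | right].
(* a ^ t = a ^ i z would make t ^ 2, which centralises a, map a to a ^ 3. *)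
have : a ^+ 1 * z ^+ 0 = (a ^+ i * z ^+ 1) ^+ i * (a ^+ 2 * z ^+ 1).
  by rewrite expg0 mulg1 expg1 -{1}att {1}Eat conjMg !conjXg Eat conj_C4xC2_z.
rewrite (C4xC2_expgMn caz) (C4xC2_mulg caz) => /(C4xC2_eq oa oz z_notin_a)[E1 _].
by case: i lt_i4 i_odd E1 {Eat} => [|[|[|[|//]]]].
Qed.

Lemma C4xC2_conj_fixed :
  exists A, [/\ #[A] = 4, z \notin <[A]>, <[A]> * <[z]> = J, A ^ t = A
              & z ^ t = A ^+ 2 * z].
Proof.
have [at_a | at_a3] := conj_C4xC2_a; first by exists a; split; rewrite ?conj_C4xC2_z.
have [oaz z_notin_az defJ] := C4xC2_mulr oa oz caz z_notin_a.
exists (a * z); split; rewrite ?conj_C4xC2_z //.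
  by rewrite conjMg at_a3 conj_C4xC2_z mulgA -expgD -(expg_mod_order a) oa.
by rewrite expgMn // z2 mulg1.
Qed.

End InvolutoryConjugation.

Lemma C4xC2_isom (gT rT : finGroupType) (a z : gT) (a' z' : rT) :
    #[a] = 4 -> #[z] = 2 -> commute a z -> z \notin <[a]> ->
    #[a'] = 4 -> #[z'] = 2 -> commute a' z' -> z' \notin <[a']> ->
  exists f : {morphism (<[a]> <*> <[z]>)%G >-> rT},
    [/\ 'injm f, f a = a', f z = z' & f @* (<[a]> <*> <[z]>) = <[a']> * <[z']>].
Proof.
move=> oa oz caz z_notin_a oa' oz' caz' z_notin_a'.
have da : #[a'] %| #[a] by rewrite oa oa'.
have dz : #[z'] %| #[z] by rewrite oz oz'.
have cf : eltm dz @* <[z]> \subset 'C(eltm da @* <[a]>).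
  by rewrite !im_eltm; apply: C4xC2_cent.
pose f := dprodm_morphism (C4xC2_dprod oz caz z_notin_a) cf.
exists f; split.
- by rewrite injm_dprodm !injm_eltm oa oa' oz oz' !im_eltm (C4xC2_TI oz' z_notin_a') eqxx.
- by rewrite [f a](dprodmEl _ _ (cycle_id a)); apply: eltm_id.
- by rewrite [f z](dprodmEr _ _ (cycle_id z)); apply: eltm_id.
by rewrite im_dprodm !im_eltm.
Qed.

Lemma isog_M16 (gT : finGroupType) (G : {group gT}) (x y : gT) :
    #|G| = 16 -> <[x]> <*> <[y]> = G ->
    x ^+ 8 = 1 -> y ^+ 2 = 1 -> x ^ y = x ^+ 5 ->
  G \isog Grp (u : v : (u ^+ 8, v ^+ 2, u ^ v = u ^+ 5)).
Proof.
move=> oG defG x8 y2 xy; have isoMod := Grp_modular_group (isT : prime 2) (isT : 2 < 4).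
apply: (isoGrp_trans _ isoMod); apply/(isoGrpP _ isoMod).
rewrite card_modular_group //; split=> //.
by apply/existsP; exists (x, y); rewrite /= !xpair_eqE defG x8 y2 xy !eqxx.
Qed.

Lemma lpermE n s i : lperm_ok n s -> lperm n s i = inord (nth 0 s i).
Proof. by rewrite permE /lperm_fun => ->. Qed.

Local Ltac perm_eq_by_eval :=
  rewrite ?expgS ?expg0 ?mulg1 ?mul1g; apply/permP=> -[[|[|[|[|[|[|[|[|?]]]]]]]] ?];
  rewrite ?permM ?perm1 ?lpermE //; apply/val_inj=> //=; rewrite ?inordK //.

Local Ltac perm_neq_at k :=
  rewrite ?expgS ?expg0 ?mulg1 ?mul1g; apply/eqP=> /permP/(_ (inord k))/(congr1 val);
  rewrite ?permM ?perm1 ?lpermE //= ?inordK //.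

Lemma order_N16_a : #[N16_a] = 4.
Proof.
by apply: (@orderXprime _ 2 2) => //; apply: nt_prime_order => //;
  [perm_eq_by_eval | perm_neq_at 0].
Qed.

Lemma order_N16_b : #[N16_b] = 2.
Proof. by apply: nt_prime_order => //; [perm_eq_by_eval | perm_neq_at 4]. Qed.

Lemma order_N16_c : #[N16_c] = 2.
Proof. by apply: nt_prime_order => //; [perm_eq_by_eval | perm_neq_at 0]. Qed.

Lemma commute_N16_ab : commute N16_a N16_b.
Proof. by rewrite /commute; perm_eq_by_eval. Qed.

Lemma conj_N16_ac : N16_a ^ N16_c = N16_a.
Proof.
have cac : commute N16_a N16_c by rewrite /commute; perm_eq_by_eval.
by rewrite conjgE cac mulKg.
Qed.

Lemma conj_N16_bc : N16_b ^ N16_c = N16_a ^+ 2 * N16_b.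
Proof.
have bc : N16_b * N16_c = N16_c * (N16_a ^+ 2 * N16_b) by perm_eq_by_eval.
by rewrite conjgE bc mulKg.
Qed.

Lemma N16_b_notin : N16_b \notin <[N16_a]>.
Proof.
apply/cycleP=> -[i]; rewrite -(expg_mod_order N16_a i) order_N16_a.
have : i %% 4 < 4 by rewrite ltn_pmod.
case: (i %% 4) => [|[|[|[|//]]]] _; apply/eqP;
  [perm_neq_at 4 | perm_neq_at 0 | perm_neq_at 0 | perm_neq_at 0].
Qed.

Lemma N16_c_notin : N16_c \notin <[N16_a]> * <[N16_b]>.
Proof.
apply/negP=> /(C4xC2_coord order_N16_a order_N16_b)[i [j [lt_i4 lt_j2 /eqP]]].
by apply/negP; case: j lt_j2 => [|[|//]] _; case: i lt_i4 => [|[|[|[|//]]]] _; perm_neq_at 0.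
Qed.

Section OrderSixteen.

Variables (gT : finGroupType) (G : {group gT}) (A z t : gT).
Hypotheses (oG : #|G| = 16) (oA : #[A] = 4) (oz : #[z] = 2) (cAz : commute A z)
  (z_notin_A : z \notin <[A]>).
Hypotheses (AG : A \in G) (zG : z \in G) (tG : t \in G)
  (t_notin_J : t \notin <[A]> * <[z]>) (At : A ^ t = A) (zt : z ^ t = A ^+ 2 * z).

Local Notation J := (<[A]> <*> <[z]>)%G.

Let JE : J :=: <[A]> * <[z]>. Proof. exact: C4xC2_joinE. Qed.
Let sJG : J \subset G. Proof. by rewrite join_subG !cycle_subG AG. Qed.
Let iJG : #|G : J| = 2. Proof. by rewrite -divgS // oG JE card_C4xC2. Qed.
Let tGJ : t \in G :\: J. Proof. by rewrite inE JE t_notin_J. Qed.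
Let z2 : z ^+ 2 = 1. Proof. by rewrite -oz expg_order. Qed.

Lemma isog_N16_of_involution : t ^+ 2 = 1 -> G \isog N16.
Proof.
move=> t2; have ot : #[t] = 2.
  by apply: nt_prime_order => //; apply: contraNneq t_notin_J => ->; rewrite -JE group1.
have defG := index2_sdprod sJG iJG tGJ ot.
have [fJ [injfJ fJA fJz imfJ]] := C4xC2_isom oA oz cAz z_notin_A
  order_N16_a order_N16_b commute_N16_ab N16_b_notin.
have dt : #[N16_c] %| #[t] by rewrite ot order_N16_c.
have [AJ zJ] : A \in J /\ z \in J by rewrite JE (a_in_C4xC2 A z) (z_in_C4xC2 A z).
have actf : {in J & <[t]>, morph_act 'J 'J fJ (eltm dt)}.
  move=> x y xJ; rewrite cycle2g // => /set2P[-> | ->] /=.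
    by rewrite (morph1 (eltm_morphism dt)) !conjg1.
  move: xJ; rewrite eltm_id JE => /(C4xC2_coord oA oz)[i [j [_ _ ->]]].
  rewrite conjMg !conjXg At zt !morphM ?groupX ?groupM // !morphX ?groupM //.
  by rewrite morphM ?groupX // morphX // fJA fJz conjMg !conjXg conj_N16_ac conj_N16_bc.
set f := sdprodm_morphism defG actf.
have fA : f A = N16_a by rewrite /= sdprodmEl.
have fz : f z = N16_b by rewrite /= sdprodmEl.
have ft : f t = N16_c by rewrite /= sdprodmEr ?cycle_id //; apply: eltm_id.
apply/isogP; exists f.
  rewrite injm_sdprodm injfJ injm_eltm ot order_N16_c imfJ im_eltm.
  rewrite -(C4xC2_joinE commute_N16_ab) setIC prime_TIg ?eqxx ?cycle_subG //.
    by rewrite -orderE order_N16_c.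
  by rewrite /= (C4xC2_joinE commute_N16_ab) N16_c_notin.
apply/eqP; rewrite eqEsubset; apply/andP; split.
  by rewrite im_sdprodm imfJ im_eltm !mul_subG // cycle_subG mem_gen // !inE eqxx ?orbT.
rewrite gen_subG; apply/subsetP=> x; rewrite !inE -!orbA => /or3P[] /eqP ->.
- by rewrite -fA mem_morphim.
- by rewrite -fz mem_morphim.
- by rewrite -ft mem_morphim.
Qed.

Lemma sqr_in_cycle : exists2 i, i < 4 & t ^+ 2 = A ^+ i.
Proof.
have := index2_expg2 sJG iJG tG.
rewrite JE => /(C4xC2_coord oA oz)[i [j [lt_i4 lt_j2 Et2]]].
exists i => //; case: j lt_j2 Et2 => [|[|//]] _ Et2; first by rewrite Et2 mulg1.
have fix_t2 : (t ^+ 2) ^ t = t ^+ 2 by rewrite conjgE -expgSr expgS mulKg.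
rewrite Et2 conjMg !conjXg At zt expg1 mulgA -expgD in fix_t2.
have [] := C4xC2_eq oA oz z_notin_A (i := i + 2) (j := 1) (k := i) (l := 1) fix_t2.
by case: i lt_i4 {Et2 fix_t2} => [|[|[|[|]]]].
Qed.

Lemma isog_M16_of_sqr : t ^+ 2 = A \/ t ^+ 2 = A ^+ 3 ->
  G \isog Grp (u : v : (u ^+ 8, v ^+ 2, u ^ v = u ^+ 5)).
Proof.
move=> t2; have [t4 A_in_t] : t ^+ 4 = A ^+ 2 /\ A \in <[t]>.
  rewrite -[4%N]/(2 * 2)%N expgM; case: t2 => t2; rewrite t2.
    by rewrite -t2 mem_cycle.
  split; first by rewrite -expgM -(expg_mod_order A 6) oA.
  have -> : A = (t ^+ 2) ^+ 3 by rewrite t2 -expgM -(expg_mod_order A 9) oA.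
  by rewrite !groupX ?cycle_id.
have defG : <[t]> <*> <[z]> = G.
  have sJL : J \subset <[t]> <*> <[z]>.
    by rewrite join_subG joing_subr andbT cycle_subG (subsetP (joing_subl _ _)).
  have sLG : <[t]> <*> <[z]> \subset G by rewrite join_subG !cycle_subG tG.
  have : maximal_eq J G by rewrite /maximal_eq p_index_maximal ?iJG ?orbT.
  case/maximal_eqP=> _ /(_ _ sJL sLG)[eqLJ | //].
  by move: tGJ; rewrite inE -eqLJ mem_gen // inE cycle_id.
apply: (isog_M16 oG defG _ z2).
  by rewrite -[8%N]/(4 * 2)%N expgM t4 -expgM -[(2 * 2)%N]/4%N -oA expg_order.
rewrite conjgE invg_expg oz mulgA (conjgC z t) zt -!mulgA -[z * z]/(z ^+ 2) z2 mulg1.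
by rewrite -[A * A]/(A ^+ 2) -t4 -expgS.
Qed.

End OrderSixteen.

Lemma isog_M16_or_N16 (gT : finGroupType) (G : {group gT}) (a z t : gT) :
    #|G| = 16 -> #[a] = 4 -> #[z] = 2 -> commute a z -> z \notin <[a]> ->
    <[a]> * <[z]> \subset G -> t \in G -> t \notin <[a]> * <[z]> -> z ^ t != z ->
  G \isog Grp (u : v : (u ^+ 8, v ^+ 2, u ^ v = u ^+ 5)) \/ G \isog N16.
Proof.
move=> oG oa oz caz z_notin_a sJG tG t_notin_J zt.
have JE : (<[a]> <*> <[z]>)%G :=: <[a]> * <[z]> := C4xC2_joinE caz.
rewrite -JE in sJG; have iJG : #|G : <[a]> <*> <[z]>| = 2.
  by rewrite -divgS // oG JE card_C4xC2.
have nJt : t \in 'N(<[a]> * <[z]>).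
  by rewrite -JE (subsetP (normal_norm (index2_normal sJG iJG))).
have t2J : t ^+ 2 \in <[a]> * <[z]> by rewrite -JE (index2_expg2 sJG iJG tG).
have [A [oA z_notin_A defJ At zt']] := C4xC2_conj_fixed oa oz caz z_notin_a nJt t2J zt.
have [AJ zJ] : A \in <[a]> * <[z]> /\ z \in <[a]> * <[z]>.
  by rewrite -defJ (a_in_C4xC2 A z) (z_in_C4xC2 A z).
have cAz : commute A z := C4xC2_comm oa oz caz AJ zJ.
have [AG zG] : A \in G /\ z \in G by rewrite !(subsetP sJG) ?JE.
rewrite -defJ in t_notin_J.
have [i lt_i4 t2] : exists2 i, i < 4 & t ^+ 2 = A ^+ i.
  by apply: (sqr_in_cycle (G := G) (A := A) (z := z)).
have z2 : z ^+ 2 = 1 by rewrite -oz expg_order.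
have Az : A ^ z = A by rewrite conjgE cAz mulKg.
case: i lt_i4 t2 => [|[|[|[|//]]]] _ t2.
- by right; apply: (isog_N16_of_involution (A := A) (z := z) (t := t)).
- by left; apply: (isog_M16_of_sqr (A := A) (z := z) (t := t)) => //; left.
- (* t z is an involution acting on <A> * <z> as t does. *)
  right; apply: (isog_N16_of_involution (A := A) (z := z) (t := t * z)) => //.
  + by rewrite groupM.
  + apply: contra t_notin_J; rewrite defJ -JE => tzJ.
    by rewrite -(mulgK z t) groupM ?groupV // JE.
  + by rewrite conjgM At.
  + by rewrite conjgM zt' conjMg conjXg Az conjgE mulKg.
  rewrite -[(t * z) ^+ 2]/(t * z * (t * z)) mulgA -(mulgA t z t) (conjgC z t) zt'.
  rewrite !mulgA -[t * t]/(t ^+ 2) t2 -!mulgA -[z * z]/(z ^+ 2) z2 mulg1.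
  by rewrite -[LHS]/(A ^+ 4) -oA expg_order.
- by left; apply: (isog_M16_of_sqr (A := A) (z := z) (t := t)) => //; right.
Qed.

Lemma order_frob_a : #[frob_a] = 5.
Proof. by apply: nt_prime_order => //; [perm_eq_by_eval | perm_neq_at 0]. Qed.

Lemma order_frob_b : #[frob_b] = 4.
Proof.
by apply: (@orderXprime _ 2 2) => //; apply: nt_prime_order => //;
  [perm_eq_by_eval | perm_neq_at 1%N].
Qed.

Lemma conj_frob_ab : frob_a ^ frob_b = frob_a ^+ 2.
Proof.
have ab : frob_a * frob_b = frob_b * frob_a ^+ 2 by perm_eq_by_eval.
by rewrite conjgE ab mulKg.
Qed.

Lemma card_Frob20 : #|Frob20| = 20.
Proof.
have nab : <[frob_b]> \subset 'N(<[frob_a]>) by rewrite norms_cycle conj_frob_ab mem_cycle.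
have -> : Frob20 :=: <[frob_a]> * <[frob_b]>.
  rewrite -norm_joinEr //; apply/eqP; rewrite eqEsubset !join_subG !sub1set !cycle_subG.
  by rewrite !mem_gen ?inE ?cycle_id ?eqxx ?orbT.
by rewrite TI_cardMg ?coprime_TIg -?orderE ?order_frob_a ?order_frob_b.
Qed.

Lemma card_Frob20xC2 : #|Frob20xC2| = 40.
Proof. by rewrite cardsX card_Frob20 cardsT card_Sn. Qed.

Lemma Frob20xC2_elements : exists b s,
  [/\ b \in Frob20xC2, s \in 'Z(Frob20xC2), #[b] = 4, #[s] = 2 & s \notin <[b]>].
Proof.
have oC2 : #|C2| = 2 by rewrite cardsT card_Sn.
have /(Cauchy (isT : prime 2))[s2 _ os2] : 2 %| #|C2| by rewrite oC2.
have cC2 : abelian C2 by rewrite cyclic_abelian ?prime_cyclic ?oC2.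
exists (pairg1 'S_2 frob_b), (pair1g 'S_5 s2); split.
- by rewrite in_setX mem_gen ?group1 // !inE eqxx orbT.
- apply/centerP; split; first by rewrite in_setX group1 in_setT.
  move=> [x1 x2] /setXP[_ x2C2]; congr (_, _); first by rewrite mulg1 mul1g.
  by apply: (centsP cC2); rewrite ?in_setT.
- by rewrite order_injm ?injm_pairg1 ?in_setT ?order_frob_b.
- by rewrite order_injm ?injm_pair1g ?in_setT.
rewrite -morphim_cycle ?in_setT // morphim_pairg1 in_setX !inE.
by rewrite -order_eq1 os2 andbF.
Qed.

Lemma isog_Frob20xC2_elements (gT : finGroupType) (G : {group gT}) :
    G \isog Frob20xC2 ->
  #|G| = 40 /\ exists b s,
    [/\ b \in G, s \in 'Z(G), #[b] = 4, #[s] = 2 & s \notin <[b]>].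
Proof.
rewrite isog_sym => /isogP[f injf imf].
have [b [s [bF sZ ob os s_notin_b]]] := Frob20xC2_elements.
have sF : s \in Frob20xC2 := subsetP (center_sub _) s sZ.
split; first by rewrite -imf card_injm // card_Frob20xC2.
exists (f b), (f s); split.
- by rewrite -imf mem_morphim.
- by rewrite -imf -injm_center // mem_morphim.
- by rewrite order_injm.
- by rewrite order_injm.
apply: contra s_notin_b; rewrite -morphim_cycle // => fs_fb.
by rewrite -(injmK injf (_ : <[b]> \subset _)) ?mem_morphpre ?cycle_subG.
Qed.

Lemma sylow2_C4xC2 (gT : finGroupType) (G P : {group gT}) (b s : gT) :
    2.-Sylow(G) P -> #|P| = 8 -> b \in G -> s \in 'Z(G) ->
    #[b] = 4 -> #[s] = 2 -> s \notin <[b]> ->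
  exists a, [/\ #[a] = 4, s \notin <[a]> & P :=: <[a]> * <[s]>].
Proof.
move=> sylP oP bG sZ ob os s_notin_b.
have [sG csG] := centerP _ _ sZ.
have cbs : commute b s by apply/commute_sym/csG.
have QE : (<[b]> <*> <[s]>)%G :=: <[b]> * <[s]> := C4xC2_joinE cbs.
have sylQ : 2.-Sylow(G) (<[b]> <*> <[s]>).
  rewrite pHallE join_subG !cycle_subG bG sG /= QE card_C4xC2 //.
  by rewrite -oP (card_Hall sylP).
have [g gG defP] := Sylow_trans sylQ sylP.
have sg : s ^ g = s by rewrite conjgE (csG g gG) mulKg.
exists (b ^ g); split; first by rewrite orderJ.
  by rewrite cycleJ -{1}sg memJ_conjg.
by rewrite defP QE conjsMg -!cycleJ sg.
Qed.

Theorem lemma4p2 (gT : finGroupType) (Gx Ge Gxy : {group gT}) :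
  amalgam52 Gx Ge Gxy ->
  primitive_amalgam Gx Ge Gxy ->
  edge_kernel Gx Ge Gxy = 1 ->
  Gx \isog Frob20xC2 ->
  (Ge \isog Grp (u : v : (u ^+ 8, v ^+ 2, u ^ v = u ^+ 5))) \/ Ge \isog N16.
Proof.
case=> sGxyGx sGxyGe _ iGx iGe _ trivK.
case/isog_Frob20xC2_elements=> oGx [b [s [bGx sZ ob os s_notin_b]]].
have oGxy : #|Gxy| = 8.
  by apply/eqP; rewrite -(eqn_pmul2r (indexg_gt0 Gx Gxy)) Lagrange // oGx iGx.
have oGe : #|Ge| = 16 by rewrite -(Lagrange sGxyGe) oGxy iGe.
have sylGxy : 2.-Sylow(Gx) Gxy by rewrite pHallE sGxyGx oGxy oGx p_part.
have [a [oa s_notin_a defGxy]] := sylow2_C4xC2 sylGxy oGxy bGx sZ ob os s_notin_b.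
have [aGxy sGxy] : a \in Gxy /\ s \in Gxy by rewrite defGxy a_in_C4xC2 z_in_C4xC2.
have cas : commute a s by apply/commute_sym/(centerP _ _ sZ).2/(subsetP sGxyGx).
set t := repr (Ge :\: Gxy).
have /setDP[tGe t_notin_Gxy] : t \in Ge :\: Gxy.
  have /set0Pn[y /mem_repr //] : Ge :\: Gxy != set0.
  by rewrite setD_eq0; apply: contraTN (isT : 8 < 16) => /subset_leq_card; rewrite oGe oGxy.
have st : s ^ t != s.
  have sK : s \in vertex_kernel Gx Gxy := mem_gcore_center sZ sGxy.
  apply/eqP=> st; have : s \in edge_kernel Gx Ge Gxy.
    by rewrite /edge_kernel -/t inE sK -{1}st memJ_conjg.
  by rewrite trivK inE -order_eq1 os.
by apply: (isog_M16_or_N16 oGe oa os cas s_notin_a _ tGe _ st); rewrite -defGxy.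
Qed.
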